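(* Let $R$ be a valuation ring with maximal ideal $P$, let $E$ be an injective $R$-module and let $r\in P$. Then $E/rE$ is an injective $R/rR$-module.
   Context: All rings are commutative with identity. A valuation ring is a ring whose ideals are totally ordered by inclusion; $P$ denotes its unique maximal ideal. *)

From HB Require Import structures.
From mathcomp Require Import all_boot all_order all_algebra.
Set Implicit Arguments. Unset Strict Implicit. Unset Printing Implicit Defensive.
Import GRing.Theory.
Local Open Scope ring_scope.

Definition is_ideal (R : comNzRingType) (I : R -> Prop) : Prop :=
  [/\ I 0, (forall x y, I x -> I y -> I (x + y)) & (forall a x, I x -> I (a * x))].

Definition valuation_ring (R : comNzRingType) : Prop :=
  forall I J : R -> Prop, is_ideal I -> is_ideal J ->
    (forall x, I x -> J x) \/ (forall x, J x -> I x).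

Definition maximal_ideal (R : comNzRingType) (P : R -> Prop) : Prop :=
  [/\ is_ideal P, ~ P 1 &
      forall J : R -> Prop, is_ideal J -> ~ J 1 -> (forall x, P x -> J x) ->
        forall x, J x -> P x].

Definition injective_module (S : comNzRingType) (E : lmodType S) : Prop :=
  forall (A B : lmodType S) (f : {linear A -> B}) (g : {linear A -> E}),
    injective f -> exists h : {linear B -> E}, forall a, h (f a) = g a.

(* Baer's criterion reduces the claim to extending an S-linear map
   phi : J -> Q, J an ideal of S = R/rR. Lift each phi (pi a) to some X a in E.
   Elements t with t r = 0 kill rE = ker q, so t *: X a only depends on
   phi (pi a); since divisibility in R is total, the assignment a t |-> t *: X a
   is a well-defined R-linear map on the ideal {a t | pi a \in J, t r = 0} of R,
   hence, E being injective, equal to c |-> c *: e for some e. Then X a - a *: e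
   is killed by the annihilator of r, and in an injective module such elements
   lie in rE; so phi (pi a) = pi a *: q e. *)

From HB Require Import structures.
From mathcomp Require Import all_boot all_order all_algebra.
From mathcomp Require Import boolp classical_sets.
From Stdlib Require Import ClassicalEpsilon.

Import GRing.Theory.
Local Open Scope ring_scope.
Set Implicit Arguments. Unset Strict Implicit.

Definition baer_prop (S : comNzRingType) (Q : lmodType S) : Prop :=
  forall J : S -> Prop, is_ideal J -> forall phi : S -> Q,
  (forall x y, J x -> J y -> phi (x + y) = phi x + phi y) ->
  (forall a x, J x -> phi (a * x) = a *: phi x) ->
  exists y, forall j, J j -> phi j = j *: y.

Definition linear_of (S : comNzRingType) (U V : lmodType S) (f : U -> V)
  (f_lin : linear f) : {linear U -> V} :=
  HB.pack f (GRing.isLinear.Build S U V *:%R f f_lin).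

Record ideal_of (R : comNzRingType) := Ideal {
  ideal_mem :> R -> Prop;
  ideal_ofP : is_ideal ideal_mem }.

Section IdealModule.
Variables (R : comNzRingType) (I : ideal_of R).

Definition ideal_pred : pred R^o := fun x => `[< I x >].

Lemma ideal_pred_submod_closed : submod_closed ideal_pred.
Proof.
case: (ideal_ofP I) => I0 ID IM; split; first exact/asboolP.
by move=> a x y /asboolP Ix /asboolP Iy; apply/asboolP/ID => //; apply: IM.
Qed.

HB.instance Definition _ :=
  GRing.isSubmodClosed.Build R R^o ideal_pred ideal_pred_submod_closed.

Definition ideal_module := {x : R^o | ideal_pred x}.
HB.instance Definition _ := [isSub of ideal_module for (@sval R^o ideal_pred)].
HB.instance Definition _ := [Choice of ideal_module by <:].
HB.instance Definition _ := [SubChoice_isSubLmodule of ideal_module by <:].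

Lemma ideal_val_linear : linear (val : ideal_module -> R^o).
Proof. by []. Qed.

End IdealModule.

Section InjectiveBaer.
Variables (R : comNzRingType) (E : lmodType R) (hE : injective_module E).

(* Baer's criterion for E, for a partial map R -> E given by its graph G:
   callers need not choose representatives to define the map. *)
Lemma injective_baer_graph (G : R -> E -> Prop) :
  G 0 0 ->
  (forall c v c' v', G c v -> G c' v' -> G (c + c') (v + v')) ->
  (forall a c v, G c v -> G (a * c) (a *: v)) ->
  (forall c v v', G c v -> G c v' -> v = v') ->
  exists e, forall c v, G c v -> v = c *: e.
Proof.
move=> G00 GD GZ Gfun.
have dom_ideal : is_ideal (fun c => exists v, G c v).
  split; first by exists 0.
  - by move=> c c' [v Gv] [v' Gv']; exists (v + v'); apply: GD.
  - by move=> a c [v Gv]; exists (a *: v); apply: GZ.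
pose I := Ideal dom_ideal.
have [psi psiG] : exists psi : ideal_module I -> E, forall z, G (val z) (psi z).
  by apply: (choice (fun z v => G (val z) v)) => z; exact: (asboolW (valP z)).
have psi_lin : linear psi.
  move=> a z z'; apply: (Gfun (val (a *: z + z'))) => //.
  exact/GD/psiG/GZ/psiG.
have [h hE_ext] := @hE _ _ (linear_of (@ideal_val_linear R I)) (linear_of psi_lin) val_inj.
exists (h (1 : R^o)) => c v Gcv.
have Ic : ideal_pred I c by apply/asboolP; exists v.
rewrite (Gfun _ _ _ Gcv (psiG (exist _ c Ic))).
have := hE_ext (exist _ c Ic) => /= <-.
by rewrite -linearZ /=; congr (h _); rewrite /GRing.scale /= mulr1.
Qed.

Lemma injective_mul_of_ann (r : R) (x : E) :
  (forall t, t * r = 0 -> t *: x = 0) -> exists x', x = r *: x'.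
Proof.
move=> ann_x.
pose G c v := exists s, c = r * s /\ v = s *: x.
have [e He] : exists e, forall c v, G c v -> v = c *: e.
  apply: injective_baer_graph.
  - by exists 0; rewrite mulr0 scale0r.
  - move=> _ _ _ _ [s [-> ->]] [s' [-> ->]].
    by exists (s + s'); rewrite mulrDr scalerDl.
  - by move=> a _ _ [s [-> ->]]; exists (a * s); rewrite mulrCA scalerA.
  - move=> _ _ _ [s [-> ->]] [s' [eq_rs ->]]; apply/eqP.
    rewrite -subr_eq0 -scalerBl ann_x //.
    by rewrite mulrBl ![_ * r]mulrC eq_rs subrr.
by exists e; apply: He; exists 1; rewrite mulr1 scale1r.
Qed.

End InjectiveBaer.

Section BaerCriterion.
Variables (S : comNzRingType) (Q : lmodType S) (Q_baer : baer_prop Q).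
Variables (A B : lmodType S) (f : {linear A -> B}) (g : {linear A -> Q})
  (f_inj : injective f).

Record partial_ext := PartialExt {
  pdom : B -> Prop;
  pmap : B -> Q;
  pdomD : forall x y, pdom x -> pdom y -> pdom (x + y);
  pdomZ : forall (a : S) x, pdom x -> pdom (a *: x);
  pdom_f : forall a, pdom (f a);
  pmapD : forall x y, pdom x -> pdom y -> pmap (x + y) = pmap x + pmap y;
  pmapZ : forall (a : S) x, pdom x -> pmap (a *: x) = a *: pmap x;
  pmap_f : forall a, pmap (f a) = g a }.

Definition ext_le (p p' : partial_ext) : bool :=
  `[< (forall x, pdom p x -> pdom p' x) /\
      (forall x, pdom p x -> pmap p x = pmap p' x) >].

Lemma pdom0 (p : partial_ext) : pdom p 0.
Proof. by rewrite -(linear0 f); apply: pdom_f. Qed.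

Lemma pdomB (p : partial_ext) x y : pdom p x -> pdom p y -> pdom p (x - y).
Proof. by move=> px py; rewrite -scaleN1r; apply/pdomD/pdomZ. Qed.

Lemma pmapB (p : partial_ext) x y : pdom p x -> pdom p y ->
  pmap p (x - y) = pmap p x - pmap p y.
Proof. by move=> px py; rewrite -!scaleN1r pmapD ?pmapZ //; apply: pdomZ. Qed.

Definition f_inv (b : B) : A := epsilon (inhabits 0) (fun a => b = f a).

Lemma f_invK a : f_inv (f a) = a.
Proof.
by apply: f_inj; rewrite -(epsilon_spec (inhabits 0) (fun a' => f a = f a')) //; exists a.
Qed.

Definition ext_on_image : partial_ext.
Proof.
refine (@PartialExt (fun b => exists a, b = f a) (g \o f_inv) _ _ _ _ _ _) => /=.
- by move=> _ _ [a ->] [a' ->]; exists (a + a'); rewrite linearD.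
- by move=> c _ [a ->]; exists (c *: a); rewrite linearZ.
- by move=> a; exists a.
- by move=> _ _ [a ->] [a' ->]; rewrite -linearD !f_invK linearD.
- by move=> c _ [a ->]; rewrite -linearZ !f_invK linearZ.
- by move=> a; rewrite f_invK.
Defined.

Section ChainUpperBound.
Variables (C : set partial_ext) (C_total : total_on C ext_le) (p0 : partial_ext).
Hypothesis C_p0 : C p0.

Definition chain_dom (x : B) := exists p, C p /\ pdom p x.
Definition chain_pick (x : B) :=
  epsilon (inhabits p0) (fun p => C p /\ pdom p x).
Definition chain_map (x : B) := pmap (chain_pick x) x.

Lemma chain_mapE p x : C p -> pdom p x -> chain_map x = pmap p x.
Proof.
move=> Cp px; have [Cq qx] : C (chain_pick x) /\ pdom (chain_pick x) x.
  by apply: (epsilon_spec (inhabits p0) (fun p => C p /\ pdom p x)); exists p.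
by rewrite /chain_map; case: (C_total Cq Cp) => /asboolP [_ ->].
Qed.

Lemma chain_dom2 p p' x y : C p -> C p' -> pdom p x -> pdom p' y ->
  exists2 q, C q & pdom q x /\ pdom q y.
Proof.
move=> Cp Cp' px p'y; case: (C_total Cp Cp') => /asboolP [le_dom _].
- by exists p' => //; split => //; apply: le_dom.
- by exists p => //; split => //; apply: le_dom.
Qed.

Definition chain_sup : partial_ext.
Proof.
refine (@PartialExt chain_dom chain_map _ _ _ _ _ _).
- move=> x y [p [Cp px]] [p' [Cp' p'y]].
  have [q Cq [qx qy]] := chain_dom2 Cp Cp' px p'y.
  by exists q; split => //; apply: pdomD.
- by move=> a x [p [Cp px]]; exists p; split => //; apply: pdomZ.
- by move=> a; exists p0; split => //; apply: pdom_f.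
- move=> x y [p [Cp px]] [p' [Cp' p'y]].
  have [q Cq [qx qy]] := chain_dom2 Cp Cp' px p'y.
  by rewrite !(chain_mapE Cq) ?pmapD //; apply: pdomD.
- move=> a x [p [Cp px]].
  by rewrite !(chain_mapE Cp) ?pmapZ //; apply: pdomZ.
- by move=> a; rewrite (chain_mapE C_p0 (pdom_f p0 a)) pmap_f.
Defined.

Lemma chain_sup_ub p : C p -> ext_le p chain_sup.
Proof.
move=> Cp; apply/asboolP; split=> x px; first by exists p.
by rewrite /= (chain_mapE Cp).
Qed.

End ChainUpperBound.

Section OneStepExtension.
Variables (p : partial_ext) (b : B).

Definition conductor (s : S) := pdom p (s *: b).

Lemma conductor_ideal : is_ideal conductor.
Proof.
rewrite /conductor; split; first by rewrite scale0r; apply: pdom0.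
- by move=> s s' ps ps'; rewrite scalerDl; apply: pdomD.
- by move=> a s ps; rewrite -scalerA; apply: pdomZ.
Qed.

Lemma conductor_baer : exists y, forall s, conductor s -> pmap p (s *: b) = s *: y.
Proof.
apply: Q_baer conductor_ideal _ _ _ => [s s' ps ps' | a s ps].
- by rewrite scalerDl pmapD.
- by rewrite -scalerA pmapZ.
Qed.

Variables (y : Q) (yP : forall s, conductor s -> pmap p (s *: b) = s *: y).

Definition step_dom x := exists d s, pdom p d /\ x = d + s *: b.
Definition step_repr x := epsilon (inhabits (0, 0))
  (fun ds : B * S => pdom p ds.1 /\ x = ds.1 + ds.2 *: b).
Definition step_map x := pmap p (step_repr x).1 + (step_repr x).2 *: y.

Lemma step_mapE d s : pdom p d -> step_map (d + s *: b) = pmap p d + s *: y.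
Proof.
move=> pd; rewrite /step_map.
have [] : pdom p (step_repr (d + s *: b)).1 /\
    d + s *: b = (step_repr (d + s *: b)).1 + (step_repr (d + s *: b)).2 *: b.
  by apply: (epsilon_spec (inhabits (0, 0))
    (fun ds : B * S => pdom p ds.1 /\ d + s *: b = ds.1 + ds.2 *: b)); exists (d, s).
case: (step_repr _) => d' s' /= pd' eq_ds.
have diff : (s' - s) *: b = d - d'.
  by rewrite scalerBl -[s' *: b](addKr d') -eq_ds -addrA addrK addrC.
have := @yP (s' - s); rewrite /conductor diff => /(_ (pdomB pd pd')).
rewrite pmapB // scalerBl => /eqP; rewrite subr_eq => /eqP ->.
by rewrite addrAC subrK addrC.
Qed.

Definition step_ext : partial_ext.
Proof.
refine (@PartialExt step_dom step_map _ _ _ _ _ _).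
- move=> _ _ [d [s [pd ->]]] [d' [s' [pd' ->]]]; exists (d + d'), (s + s').
  by split; [apply: pdomD | rewrite scalerDl addrACA].
- move=> a _ [d [s [pd ->]]]; exists (a *: d), (a * s).
  by split; [apply: pdomZ | rewrite scalerDr scalerA].
- by move=> a; exists (f a), 0; rewrite scale0r addr0; split => //; apply: pdom_f.
- move=> _ _ [d [s [pd ->]]] [d' [s' [pd' ->]]].
  rewrite addrACA -scalerDl !step_mapE ?pmapD //; last exact: pdomD.
  by rewrite scalerDl addrACA.
- move=> a _ [d [s [pd ->]]].
  rewrite scalerDr scalerA !step_mapE ?pmapZ //; last exact: pdomZ.
  by rewrite scalerDr scalerA.
- move=> a; rewrite -[f a]addr0 -(scale0r b) step_mapE; last exact: pdom_f.
  by rewrite scale0r addr0 pmap_f.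
Defined.

Lemma step_ext_ge : ext_le p step_ext.
Proof.
apply/asboolP; split=> x px; first by exists x, 0; rewrite scale0r addr0.
have x_step : x = x + 0 *: b by rewrite scale0r addr0.
by rewrite /= [in RHS]x_step step_mapE // scale0r addr0.
Qed.

End OneStepExtension.

Lemma baer_extension : exists h : {linear B -> Q}, forall a, h (f a) = g a.
Proof.
have [p p_max] : exists p, premaximal ext_le p.
  apply: (ZL_preorder ext_on_image).
  - by move=> p; apply/asboolP.
  - move=> p1 p2 p3 /asboolP [le12 eq12] /asboolP [le23 eq23].
    by apply/asboolP; split=> x px; rewrite ?eq12 ?eq23 //; auto.
  - move=> C C_total; have [[p0 Cp0] | C0] := pselect (exists p0, C p0).
      by exists (chain_sup C_total Cp0) => p; apply: chain_sup_ub.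
    by exists ext_on_image => p Cp; case: C0; exists p.
have pdomT x : pdom p x.
  have [y yP] := conductor_baer p x.
  have /asboolP [le_dom _] := p_max _ (step_ext_ge yP).
  by apply: le_dom; exists 0, 1; rewrite scale1r add0r; split => //; apply: pdom0.
have pmap_lin : linear (pmap p).
  by move=> a x z; rewrite pmapD ?pmapZ ?pdomT.
by exists (linear_of pmap_lin); apply: pmap_f.
Qed.

End BaerCriterion.

Lemma baer_injective (S : comNzRingType) (Q : lmodType S) :
  baer_prop Q -> injective_module Q.
Proof. by move=> Q_baer A B f g f_inj; apply: baer_extension. Qed.

Lemma principal_ideal (R : comNzRingType) (u : R) :
  is_ideal (fun x => exists w, x = u * w).
Proof.
split; first by exists 0; rewrite mulr0.
- by move=> _ _ [w ->] [w' ->]; exists (w + w'); rewrite mulrDr.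
- by move=> a _ [w ->]; exists (a * w); rewrite mulrCA.
Qed.

Lemma valuation_dvd_total (R : comNzRingType) (u v : R) : valuation_ring R ->
  (exists w, v = u * w) \/ (exists w, u = v * w).
Proof.
move=> hR; case: (hR _ _ (principal_ideal u) (principal_ideal v)) => sub_uv.
- by right; apply: sub_uv; exists 1; rewrite mulr1.
- by left; apply: sub_uv; exists 1; rewrite mulr1.
Qed.

Section QuotientBaer.
Variables (R : comNzRingType) (hR : valuation_ring R)
  (E : lmodType R) (hE : injective_module E) (r : R)
  (S : comNzRingType) (pi : {rmorphism R -> S})
  (pi_surj : forall s : S, exists a : R, pi a = s)
  (pi_ker : forall a : R, pi a = 0 <-> exists b : R, a = r * b)
  (Q : lmodType S) (q : E -> Q)
  (q_add : forall x y : E, q (x + y) = q x + q y)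
  (q_scale : forall (a : R) (x : E), q (a *: x) = pi a *: q x)
  (q_surj : forall y : Q, exists x : E, q x = y)
  (q_ker : forall x : E, q x = 0 <-> exists x' : E, x = r *: x').

Lemma q0 : q 0 = 0.
Proof. by apply: (@addrI _ (q 0)); rewrite -q_add !addr0. Qed.

Lemma qB x y : q (x - y) = q x - q y.
Proof. by apply/eqP; rewrite eq_sym subr_eq -q_add subrK. Qed.

Lemma pi_r : pi r = 0.
Proof. by apply/pi_ker; exists 1; rewrite mulr1. Qed.

Lemma ann_scale_eq t x y : t * r = 0 -> q x = q y -> t *: x = t *: y.
Proof.
move=> tr0 qxy; apply/eqP; rewrite -subr_eq0 -scalerBr.
have /q_ker [z ->] : q (x - y) = 0 by rewrite qB qxy subrr.
by rewrite scalerA tr0 scale0r.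
Qed.

Lemma q_eq0_of_ann x : (forall t, t * r = 0 -> t *: x = 0) -> q x = 0.
Proof. by move=> /(injective_mul_of_ann hE) x_rE; apply/q_ker. Qed.

Section IdealMap.
Variables (J : S -> Prop) (hJ : is_ideal J) (phi : S -> Q)
  (phiD : forall x y, J x -> J y -> phi (x + y) = phi x + phi y)
  (phiZ : forall a x, J x -> phi (a * x) = a *: phi x)
  (X : R -> E) (qX : forall a, q (X a) = phi (pi a)).

Let phi0 : phi 0 = 0.
Proof.
have J0 : J 0 by case: hJ.
by apply: (@addrI _ (phi 0)); rewrite -phiD // !addr0.
Qed.

Let J_pi0 : J (pi 0).
Proof. by rewrite rmorph0; case: hJ. Qed.

Let J_pi_mul a w : J (pi a) -> J (pi (a * w)).
Proof. by case: hJ => _ _ JM Ja; rewrite rmorphM mulrC; apply: JM. Qed.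

Let J_pi_add a a' : J (pi a) -> J (pi a') -> J (pi (a + a')).
Proof. by case: hJ => _ JD _ Ja Ja'; rewrite rmorphD; apply: JD. Qed.

Lemma q_scaleX t c : J (pi c) -> q (t *: X c) = phi (pi (c * t)).
Proof. by move=> Jc; rewrite q_scale qX -phiZ // -rmorphM mulrC. Qed.

Lemma X_add t a a' : J (pi a) -> J (pi a') -> t * r = 0 ->
  t *: X (a + a') = t *: X a + t *: X a'.
Proof.
move=> Ja Ja' tr0; rewrite -scalerDr; apply: ann_scale_eq => //.
by rewrite q_add !qX rmorphD phiD.
Qed.

Lemma X_mul t a w : J (pi a) -> t * r = 0 -> t *: X (a * w) = (t * w) *: X a.
Proof.
move=> Ja tr0; rewrite -scalerA; apply: ann_scale_eq => //.
by rewrite q_scale !qX rmorphM [pi a * _]mulrC phiZ.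
Qed.

Lemma ann_X_eq0 t c : J (pi c) -> t * r = 0 -> c * t = 0 -> t *: X c = 0.
Proof.
move=> Jc tr0 ct0.
have [[v r_cv] | [d ->]] := valuation_dvd_total c r hR; last first.
  have qXc0 : q (X (r * d)) = q 0 by rewrite qX rmorphM pi_r mul0r phi0 q0.
  by rewrite (ann_scale_eq tr0 qXc0) scaler0.
have [[w t_vw] | [w v_tw]] := valuation_dvd_total v t hR.
- rewrite t_vw mulrC -scalerA.
  have /q_ker [x' ->] : q (v *: X c) = 0 by rewrite q_scaleX // -r_cv pi_r phi0.
  by rewrite scalerA r_cv mulrCA [w * v]mulrC -t_vw ct0 scale0r.
- have /q_ker [x' ->] : q (t *: X c) = 0 by rewrite q_scaleX // ct0 rmorph0 phi0.
  by rewrite r_cv v_tw mulrA ct0 mul0r scale0r.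
Qed.

Lemma ann_X_eq a a' t t' : J (pi a) -> J (pi a') -> t * r = 0 -> t' * r = 0 ->
  a * t = a' * t' -> t *: X a = t' *: X a'.
Proof.
wlog [w ->] : a a' t t' / exists w, t' = t * w.
  move=> wlog_case Ja Ja' tr0 t'r0 eq_at.
  have [t_dvd | [w t_t'w]] := valuation_dvd_total t t' hR; first exact: wlog_case.
  by symmetry; apply: wlog_case; rewrite // t_t'w; exists w.
move=> Ja Ja' tr0 _ eq_at.
have Jc : J (pi (a - a' * w)).
  by rewrite -mulrN; apply/J_pi_add/J_pi_mul.
have Ja'w : J (pi (a' * w)) by apply: J_pi_mul.
rewrite -[a](subrK (a' * w)) X_add // X_mul // ann_X_eq0 ?add0r //.
by rewrite mulrBl eq_at -mulrA [w * t]mulrC subrr.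
Qed.

Definition X_graph c v :=
  exists a t, [/\ J (pi a), t * r = 0, c = a * t & v = t *: X a].

Lemma X_graph_add_dvd a t a' w : J (pi a) -> J (pi a') -> t * r = 0 ->
  X_graph (a * t + a' * (t * w)) (t *: X a + (t * w) *: X a').
Proof.
move=> Ja Ja' tr0; exists (a + a' * w), t; split => //; first exact/J_pi_add/J_pi_mul.
  by rewrite mulrDl -mulrA [w * t]mulrC.
by rewrite X_add ?X_mul //; apply: J_pi_mul.
Qed.

Lemma X_graphD c v c' v' : X_graph c v -> X_graph c' v' -> X_graph (c + c') (v + v').
Proof.
move=> [a [t [Ja tr0 -> ->]]] [a' [t' [Ja' t'r0 -> ->]]].
have [[w ->] | [w ->]] := valuation_dvd_total t t' hR.
  exact: X_graph_add_dvd.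
by rewrite addrC [_ + _ *: X a']addrC; apply: X_graph_add_dvd.
Qed.

Lemma X_graph_scaling : exists e, forall c v, X_graph c v -> v = c *: e.
Proof.
apply: (injective_baer_graph hE) => [|||c v v'].
- by exists 0, 0; split; rewrite ?mul0r ?scale0r.
- exact: X_graphD.
- move=> d _ _ [a [t [Ja tr0 -> ->]]].
  exists (a * d), t; split => //; first exact: J_pi_mul.
    by rewrite mulrA [d * a]mulrC.
  by rewrite X_mul // scalerA mulrC.
- by move=> [a [t [Ja tr0 -> ->]]] [a' [t' [Ja' t'r0 eq_at ->]]]; apply: ann_X_eq.
Qed.

Lemma ideal_map_extends : exists y, forall j, J j -> phi j = j *: y.
Proof.
have [e eP] := X_graph_scaling.
exists (q e) => j; have [a <-] := pi_surj j => Ja.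
rewrite -q_scale -qX; apply/eqP; rewrite -subr_eq0 -qB; apply/eqP/q_eq0_of_ann.
move=> t tr0; rewrite scalerBr scalerA [t * a]mulrC -(eP _ (t *: X a)) ?subrr //.
by exists a, t.
Qed.

End IdealMap.

Lemma quotient_baer : baer_prop Q.
Proof.
move=> J hJ phi phiD phiZ.
have [X qX] := choice (fun a x => q x = phi (pi a)) (fun a => q_surj (phi (pi a))).
exact: (ideal_map_extends hJ phiD phiZ qX).
Qed.

End QuotientBaer.

Theorem mainTheorem3 (R : comNzRingType) (hR : valuation_ring R)
  (P : R -> Prop) (hP : maximal_ideal P)
  (E : lmodType R) (hE : injective_module E)
  (r : R) (hr : P r)
  (S : comNzRingType) (pi : {rmorphism R -> S})
  (pi_surj : forall s : S, exists a : R, pi a = s)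
  (pi_ker : forall a : R, pi a = 0 <-> exists b : R, a = r * b)
  (Q : lmodType S) (q : E -> Q)
  (q_add : forall x y : E, q (x + y) = q x + q y)
  (q_scale : forall (a : R) (x : E), q (a *: x) = pi a *: q x)
  (q_surj : forall y : Q, exists x : E, q x = y)
  (q_ker : forall x : E, q x = 0 <-> exists x' : E, x = r *: x') :
  injective_module Q.
Proof.
apply: baer_injective.
exact: (quotient_baer hR hE pi_surj pi_ker q_add q_scale q_surj q_ker).
Qed.
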